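(* Let $C$ be a linear code over $\mathbb{Z}_4+u\mathbb{Z}_4$ of length $n$ and let $C^{\perp}$ be its dual. Then $$swe_{C^{\perp}}(X,Y,Z,W,S)=\frac{1}{|C|}\,swe_C\big(6S+4W+X+Y+4Z,\ 6S-4W+X+Y-4Z,\ -2W+X-Y+2Z,\ 2W+X-Y-2Z,\ -2S+X+Y\big).$$
   Context: $\mathbb{Z}_4+u\mathbb{Z}_4$ is the commutative ring of characteristic $4$ with $u^2=0$. A linear code of length $n$ is a submodule of $(\mathbb{Z}_4+u\mathbb{Z}_4)^n$; its dual $C^\perp$ is taken with respect to the Euclidean inner product $\sum_i x_iy_i$ computed in the ring. For a codeword $c$, let $n_0(c)$ be the number of coordinates equal to $0$, $n_4(c)$ the number equal to $2u$, $n_3(c)$ the number in $\{1+u,1+2u,3+2u,3+3u\}$, $n_1(c)$ the number in $\{1,1+3u,3,3+u\}$, and $n_2(c)$ the number in $\{2,u,3u,2+u,2+2u,2+3u\}$. The symmetrized weight enumerator is $swe_C(X,Y,Z,W,S)=\sum_{c\in C}X^{n_0(c)}Y^{n_4(c)}Z^{n_3(c)}W^{n_1(c)}S^{n_2(c)}$. *)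

From HB Require Import structures.
From mathcomp Require Import all_boot all_order all_algebra.
Set Implicit Arguments. Unset Strict Implicit. Unset Printing Implicit Defensive.
Import Order.TTheory GRing.Theory Num.Theory.
Local Open Scope ring_scope.

(* The ring Z4 + u Z4 (u^2 = 0): the element a + u b is the pair (a, b). *)
Definition Z4u : finType := ('Z_4 * 'Z_4)%type.

Definition z4u_add (x y : Z4u) : Z4u := (x.1 + y.1, x.2 + y.2).
Definition z4u_mul (x y : Z4u) : Z4u := (x.1 * y.1, x.1 * y.2 + x.2 * y.1).
Definition z4u_zero : Z4u := (0, 0).

Definition word (n : nat) : finType := {ffun 'I_n -> Z4u}.

Definition wadd n (x y : word n) : word n := [ffun i => z4u_add (x i) (y i)].
Definition wscale n (r : Z4u) (x : word n) : word n := [ffun i => z4u_mul r (x i)].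
Definition wzero n : word n := [ffun _ => z4u_zero].

Definition linear_code n (C : {set word n}) : Prop :=
  [/\ wzero n \in C,
      (forall x y, x \in C -> y \in C -> wadd x y \in C) &
      (forall r x, x \in C -> wscale r x \in C)].

Definition inner n (x y : word n) : Z4u :=
  foldr z4u_add z4u_zero [seq z4u_mul (x i) (y i) | i <- enum 'I_n].

Definition dual n (C : {set word n}) : {set word n} :=
  [set y | [forall x in C, inner x y == z4u_zero]].

Definition cls0 : pred Z4u := pred1 (0, 0).
Definition cls4 : pred Z4u := pred1 (0, 2).
Definition cls3 : pred Z4u := [pred x | x \in [:: (1, 1); (1, 2); (3, 2); (3, 3)]].
Definition cls1 : pred Z4u := [pred x | x \in [:: (1, 0); (1, 3); (3, 0); (3, 1)]].
Definition cls2 : pred Z4u :=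
  [pred x | x \in [:: (2, 0); (0, 1); (0, 3); (2, 1); (2, 2); (2, 3)]].

Definition ncount n (P : pred Z4u) (c : word n) : nat := #|[set i | P (c i)]|.

Definition swe (R : comNzRingType) n (C : {set word n}) (X Y Z W S : R) : R :=
  \sum_(c in C) (X ^+ ncount cls0 c * Y ^+ ncount cls4 c * Z ^+ ncount cls3 c
                 * W ^+ ncount cls1 c * S ^+ ncount cls2 c).

(* The map [chi (a + ub) = i ^ (a + b)] is an additive character of Z4 + uZ4
   that is nondegenerate: every nonzero ideal contains [2u], and
   [chi 2u = -1].  Hence the sum of [chi <x, y>] over a linear code C is
   [#|C|] or [0] according as y lies in the dual or not, and the usual
   Fourier-transform argument expresses [#|C| * swe (dual C)] as the sum over
   C of products of transforms of the coordinate weight.  That weight only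
   depends on the coordinate class, so its transform is a 5x5 integer matrix
   applied to (X, Y, Z, W, S), which is the substitution of the theorem.
   Since [chi] takes the value i, the computation runs in R[i] and is pulled
   back along the embedding R -> R[i]. *)

From HB Require Import structures.
From mathcomp Require Import all_boot all_order all_algebra ring.
From mathcomp.real_closed Require Import complex.
Set Implicit Arguments. Unset Strict Implicit. Unset Printing Implicit Defensive.
Import GRing.Theory Num.Theory.
Local Open Scope ring_scope.

Definition Z4_elems : seq 'Z_4 :=
  [:: @Ordinal 4 0 isT; @Ordinal 4 1 isT; @Ordinal 4 2 isT; @Ordinal 4 3 isT].
Definition Z4u_elems : seq Z4u := [seq (a, b) | a <- Z4_elems, b <- Z4_elems].

Lemma mem_Z4_elems (a : 'Z_4) : a \in Z4_elems.
Proof. by case: a => [[|[|[|[|m]]]] ?]. Qed.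

Lemma mem_Z4u_elems (t : Z4u) : t \in Z4u_elems.
Proof. by case: t => a b; apply/allpairsP; exists (a, b); rewrite !mem_Z4_elems. Qed.

Lemma Z4u_allP (P : pred Z4u) : all P Z4u_elems -> forall t, P t.
Proof. by move/allP=> allP t; apply/allP/mem_Z4u_elems. Qed.

Lemma Z4u_eqP (A : eqType) (f g : Z4u -> A) :
  all (fun t => f t == g t) Z4u_elems -> forall t, f t = g t.
Proof. by move=> /Z4u_allP fg t; apply/eqP/fg. Qed.

Lemma big_Z4u (K : nmodType) (F : Z4u -> K) :
  \sum_t F t = \sum_(t <- Z4u_elems) F t.
Proof.
apply/perm_big/uniq_perm; [exact: index_enum_uniq | by vm_compute |].
by move=> t; rewrite mem_index_enum mem_Z4u_elems.
Qed.

Definition z4u_2u : Z4u := (0, 2).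
Definition z4u_N1 : Z4u := (-1, 0).

Lemma z4u_mulA a b c : z4u_mul (z4u_mul a b) c = z4u_mul a (z4u_mul b c).
Proof. by rewrite /z4u_mul /=; congr pair; ring. Qed.

Lemma z4u_mulDl a b c :
  z4u_mul (z4u_add a b) c = z4u_add (z4u_mul a c) (z4u_mul b c).
Proof. by rewrite /z4u_mul /z4u_add /=; congr pair; ring. Qed.

Lemma z4u_mulDr a b c :
  z4u_mul a (z4u_add b c) = z4u_add (z4u_mul a b) (z4u_mul a c).
Proof. by rewrite /z4u_mul /z4u_add /=; congr pair; ring. Qed.

Lemma z4u_mulr0 a : z4u_mul a z4u_zero = z4u_zero.
Proof. by rewrite /z4u_mul /=; congr pair; ring. Qed.

Lemma z4u_addKN1 a b : z4u_add (z4u_add a b) (z4u_mul z4u_N1 b) = a.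
Proof. by case: a => a1 a2; rewrite /z4u_mul /z4u_add /=; congr pair; ring. Qed.

Lemma z4u_ideal_2u t : t != z4u_zero -> exists r, z4u_mul r t = z4u_2u.
Proof.
have /Z4u_allP/(_ t)/implyP ideal : all (fun t => (t != z4u_zero) ==>
  has (fun r => z4u_mul r t == z4u_2u) Z4u_elems) Z4u_elems by vm_compute.
by move/ideal/hasP=> [r _ /eqP rt]; exists r.
Qed.

Lemma cls_partition t : (cls0 t + cls4 t + cls3 t + cls1 t + cls2 t = 1)%N.
Proof. by move: t; apply: Z4u_eqP; vm_compute. Qed.

Lemma waddKN1 n (v : word n) :
  cancel (fun x => wadd x v) (fun x => wadd x (wscale z4u_N1 v)).
Proof. by move=> x; apply/ffunP=> i; rewrite !ffunE z4u_addKN1. Qed.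

Lemma inner_wscale n r (x y : word n) :
  inner (wscale r x) y = z4u_mul r (inner x y).
Proof.
rewrite /inner; elim: (enum 'I_n) => [|i s IH] /=; first by rewrite z4u_mulr0.
by rewrite IH ffunE z4u_mulA z4u_mulDr.
Qed.

Definition phase (t : Z4u) : 'Z_4 := t.1 + t.2.

Lemma phaseD s t : phase (z4u_add s t) = phase s + phase t.
Proof. by rewrite /phase addrACA. Qed.

(* Real and imaginary parts of [i ^ phase t], as integers. *)
Definition chi_re (t : Z4u) : int :=
  match nat_of_ord (phase t) with 0 => 1 | 2 => -1 | _ => 0 end.
Definition chi_im (t : Z4u) : int :=
  match nat_of_ord (phase t) with 1 => 1 | 3 => -1 | _ => 0 end.

(* [\sum] does not reduce under [vm_compute]; this fold does. *)
Definition Z4u_isum (f : Z4u -> int) : int :=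
  foldr (fun t acc => f t + acc) 0 Z4u_elems.

Definition class_sums (f : Z4u -> int) : seq int :=
  [seq Z4u_isum (fun t => f t * (P t)%:Z)
  | P : pred Z4u <- [:: cls0; cls4; cls3; cls1; cls2]].

(* Entry k is the coefficient of the k-th of X, Y, Z, W, S in the substituted
   weight of a coordinate equal to s. *)
Definition krawtchouk (s : Z4u) : seq int :=
  let c (P : pred Z4u) := (P s)%:Z in
  [:: c cls0 + c cls4 + c cls3 + c cls1 + c cls2;
      c cls0 + c cls4 - c cls3 - c cls1 + c cls2;
      4 * c cls0 - 4 * c cls4 + 2 * c cls3 - 2 * c cls1;
      4 * c cls0 - 4 * c cls4 - 2 * c cls3 + 2 * c cls1;
      6 * c cls0 + 6 * c cls4 - 2 * c cls2].

Lemma class_sums_chi_re s :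
  class_sums (fun t => chi_re (z4u_mul s t)) = krawtchouk s.
Proof. by move: s; apply: Z4u_eqP; vm_compute. Qed.

Lemma class_sums_chi_im s :
  class_sums (fun t => chi_im (z4u_mul s t)) = nseq 5 0.
Proof. by move: s; apply: Z4u_eqP; vm_compute. Qed.

Section ClassWeight.
Variable K : comNzRingType.

Definition class_weight (X Y Z W S : K) (t : Z4u) : K :=
  X * (cls0 t)%:R + Y * (cls4 t)%:R + Z * (cls3 t)%:R
  + W * (cls1 t)%:R + S * (cls2 t)%:R.

Lemma class_weightE X Y Z W S t : class_weight X Y Z W S t =
  X ^+ cls0 t * Y ^+ cls4 t * Z ^+ cls3 t * W ^+ cls1 t * S ^+ cls2 t.
Proof.
move: (cls_partition t); rewrite /class_weight.
by case: (cls0 t) (cls4 t) (cls3 t) (cls1 t) (cls2 t) => [] [] [] [] [] //= _;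
  ring.
Qed.

Lemma swe_prod n (C : {set word n}) X Y Z W S :
  swe C X Y Z W S = \sum_(c in C) \prod_i class_weight X Y Z W S (c i).
Proof.
have prod_pow (P : pred Z4u) (V : K) (c : word n) :
    \prod_i V ^+ P (c i) = V ^+ ncount P c.
  rewrite prodrXr /ncount -sum1_card [in RHS]big_mkcond /=.
  by congr (_ ^+ _); apply: eq_bigr => i _; rewrite inE; case: (P (c i)).
rewrite /swe; apply: eq_bigr => c _.
by under eq_bigr do rewrite class_weightE; rewrite !big_split /= !prod_pow.
Qed.

End ClassWeight.

Section Character.
Variables (K : comNzRingType) (j : K).
Hypothesis j2 : j ^+ 2 = -1.

Lemma expr_Zp4D (x y : 'Z_4) : j ^+ (x + y)%R = j ^+ x * j ^+ y.
Proof.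
have j4 : j ^+ 4 = 1 by rewrite (exprM j 2 2) j2 sqrrN expr1n.
rewrite -exprD [in RHS](divn_eq (x + y)%N 4) exprD mulnC exprM j4.
by rewrite expr1n mul1r.
Qed.

Definition chi (t : Z4u) : K := j ^+ phase t.

Lemma chiD s t : chi (z4u_add s t) = chi s * chi t.
Proof. by rewrite /chi phaseD expr_Zp4D. Qed.

Lemma chi0 : chi z4u_zero = 1.
Proof. by []. Qed.

Lemma chi_2u : chi z4u_2u = -1.
Proof. exact: j2. Qed.

Lemma chi_reim t : chi t = (chi_re t)%:~R + j * (chi_im t)%:~R.
Proof.
rewrite /chi /chi_re /chi_im.
case: (phase t) => -[|[|[|[|k]]]] //= _; rewrite ?expr0 ?expr1 ?j2.
- by rewrite mulr0 addr0.
- by rewrite mulr1 add0r.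
- by rewrite mulr0 addr0.
- by rewrite exprS j2 mulrN1 add0r.
Qed.

Lemma chi_foldr (s : seq Z4u) :
  chi (foldr z4u_add z4u_zero s) = \prod_(t <- s) chi t.
Proof.
elim: s => [|t s IH]; first by rewrite big_nil chi0.
by rewrite big_cons /= chiD IH.
Qed.

Lemma chi_inner n (x y : word n) :
  chi (inner x y) = \prod_i chi (z4u_mul (x i) (y i)).
Proof. by rewrite /inner chi_foldr big_map big_enum. Qed.

Lemma chi_inner_waddl n (x x' y : word n) :
  chi (inner (wadd x x') y) = chi (inner x y) * chi (inner x' y).
Proof.
rewrite !chi_inner -big_split; apply: eq_bigr => i _.
by rewrite ffunE z4u_mulDl chiD.
Qed.

Definition chi_hat (f : Z4u -> K) (s : Z4u) : K :=
  \sum_t chi (z4u_mul s t) * f t.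

Lemma sum_chi_inner_prod n (f : Z4u -> K) (x : word n) :
  \sum_(y : word n) chi (inner x y) * \prod_i f (y i) = \prod_i chi_hat f (x i).
Proof.
rewrite bigA_distr_bigA; apply: eq_bigr => y _.
by rewrite chi_inner -big_split.
Qed.

Lemma chi_hat_class (P : pred Z4u) s :
  chi_hat (fun t => (P t)%:R) s =
  (Z4u_isum (fun t => chi_re (z4u_mul s t) * (P t)%:Z))%:~R
  + j * (Z4u_isum (fun t => chi_im (z4u_mul s t) * (P t)%:Z))%:~R.
Proof.
rewrite /chi_hat big_Z4u /Z4u_isum; elim: Z4u_elems => [|t ts IH].
  by rewrite big_nil mulr0 addr0.
by rewrite big_cons IH chi_reim !intrD !intrM; ring.
Qed.

Lemma chi_hat_class_weight X Y Z W S s :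
  chi_hat (class_weight X Y Z W S) s =
  class_weight (6 * S + 4 * W + X + Y + 4 * Z) (6 * S - 4 * W + X + Y - 4 * Z)
               (- (2 * W) + X - Y + 2 * Z) (2 * W + X - Y - 2 * Z)
               (- (2 * S) + X + Y) s.
Proof.
have chi_hatZ (V : K) (P : pred Z4u) :
    \sum_t chi (z4u_mul s t) * (V * (P t)%:R) = V * chi_hat (fun t => (P t)%:R) s.
  by rewrite mulr_sumr; apply: eq_bigr => t _; ring.
rewrite {1}/chi_hat /class_weight.
under eq_bigr => t _ do rewrite !mulrDr.
rewrite !big_split /= !chi_hatZ !chi_hat_class.
have := class_sums_chi_re s; have := class_sums_chi_im s.
rewrite /class_sums /krawtchouk /=.
by case=> -> -> -> -> -> [-> -> -> -> ->]; ring.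
Qed.

Hypothesis two_lreg : GRing.lreg (2 : K).

Section Orthogonality.
Variables (n : nat) (C : {set word n}).
Hypothesis C_linear : linear_code C.

(* For y outside the dual, translating C by a codeword x1 with <x1, y> = 2u
   flips the sign of every term of the character sum. *)
Lemma sum_chi_inner (y : word n) :
  \sum_(x in C) chi (inner x y) = if y \in dual C then #|C|%:R else 0.
Proof.
case: C_linear => _ C_add C_scale; case: ifPn => [|y_dual].
  rewrite inE => /forall_inP orth_y; rewrite -sum1_card natr_sum.
  by apply: eq_bigr => x /orth_y/eqP ->.
have [x0 x0C x0y] : exists2 x0, x0 \in C & inner x0 y != z4u_zero.
  by apply/exists_inP; rewrite inE negb_forall_in in y_dual.
have [r rx0y] := z4u_ideal_2u x0y.
set x1 := wscale r x0; have x1C : x1 \in C by exact: C_scale.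
have shiftC x : (wadd x x1 \in C) = (x \in C).
  apply/idP/idP => [|xC]; last exact: C_add.
  by rewrite -{2}(waddKN1 x1 x) => /C_add; apply; apply: C_scale.
apply: two_lreg; rewrite mulr0 mulr2n mulrDl mul1r.
rewrite [X in _ + X = 0](reindex_inj (can_inj (waddKN1 x1))) /=.
rewrite (eq_bigl _ _ shiftC) -big_split big1 // => x _.
by rewrite chi_inner_waddl inner_wscale rx0y chi_2u mulrN1; apply: addrN.
Qed.

Lemma macwilliams_prod (f : Z4u -> K) :
  #|C|%:R * \sum_(y in dual C) \prod_i f (y i)
  = \sum_(x in C) \prod_i chi_hat f (x i).
Proof.
under [RHS]eq_bigr => x _ do rewrite -sum_chi_inner_prod.
rewrite exchange_big mulr_sumr [LHS]big_mkcond; apply: eq_bigr => y _.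
by rewrite -mulr_suml sum_chi_inner; case: ifP; rewrite ?mul0r.
Qed.

Lemma swe_macwilliams (X Y Z W S : K) :
  #|C|%:R * swe (dual C) X Y Z W S =
  swe C (6 * S + 4 * W + X + Y + 4 * Z) (6 * S - 4 * W + X + Y - 4 * Z)
        (- (2 * W) + X - Y + 2 * Z) (2 * W + X - Y - 2 * Z) (- (2 * S) + X + Y).
Proof.
rewrite !swe_prod macwilliams_prod.
by apply: eq_bigr => x _; apply: eq_bigr => i _; rewrite chi_hat_class_weight.
Qed.

End Orthogonality.
End Character.

Section ComplexEmbedding.
Variable R : fieldType.

Definition complex_of (x : R) : R[i] := Complex x 0.

Lemma complex_of_is_zmod_morphism : zmod_morphism complex_of.
Proof. by move=> a b; apply/eqP; rewrite eq_complex /= oppr0 addr0 !eqxx. Qed.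

Lemma complex_of_is_monoid_morphism : monoid_morphism complex_of.
Proof.
split=> // a b; apply/eqP.
by rewrite eq_complex /= !mulr0 !mul0r subr0 addr0 !eqxx.
Qed.

HB.instance Definition _ :=
  GRing.isZmodMorphism.Build R R[i] complex_of complex_of_is_zmod_morphism.
HB.instance Definition _ :=
  GRing.isMonoidMorphism.Build R R[i] complex_of complex_of_is_monoid_morphism.

Lemma complex_of_inj : injective complex_of.
Proof. by move=> a b [->]. Qed.

Lemma complex_i2 : (Complex 0 1 : R[i]) ^+ 2 = -1.
Proof.
by apply/eqP; rewrite expr2 eq_complex /= !mulr0 !mul0r mulr1 sub0r addr0 oppr0 !eqxx.
Qed.

Lemma complex_lreg2 : (2 : R) != 0 -> GRing.lreg (2 : R[i]).
Proof.
move=> two_neq0 a b /(congr1 ( *%R (complex_of 2^-1))).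
by rewrite !mulrA -(rmorph_nat complex_of) -rmorphM mulVf // rmorph1 !mul1r.
Qed.

Lemma swe_complex_of n (C : {set word n}) (X Y Z W S : R) :
  complex_of (swe C X Y Z W S) =
  swe C (complex_of X) (complex_of Y) (complex_of Z) (complex_of W) (complex_of S).
Proof.
rewrite /swe rmorph_sum; apply: eq_bigr => c _.
by rewrite !rmorphM !rmorphXn.
Qed.

End ComplexEmbedding.

Theorem theorem3p7 (n : nat) (C : {set word n}) (R : numFieldType)
    (X Y Z W S : R) :
  linear_code C ->
  swe (dual C) X Y Z W S =
  (#|C|%:R)^-1 *
    swe C (6 * S + 4 * W + X + Y + 4 * Z)
          (6 * S - 4 * W + X + Y - 4 * Z)
          (- (2 * W) + X - Y + 2 * Z)
          (2 * W + X - Y - 2 * Z)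
          (- (2 * S) + X + Y).
Proof.
move=> C_linear.
have C_neq0 : #|C|%:R != 0 :> R.
  by rewrite pnatr_eq0 -lt0n; apply/card_gt0P; exists (wzero n); case: C_linear.
have two_lreg : GRing.lreg (2 : R[i]) by apply: complex_lreg2; rewrite pnatr_eq0.
apply: (mulfI C_neq0); rewrite mulrA mulfV // mul1r.
apply: (@complex_of_inj R); rewrite rmorphM rmorph_nat /= !swe_complex_of.
rewrite (swe_macwilliams (complex_i2 R) two_lreg C_linear).
by rewrite !rmorphD !rmorphN !rmorphM !rmorph_nat.
Qed.
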